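(* Let $S^0$ be an adequate semigroup with semilattice of idempotents $E^0$, let $I$ be a left regular band having $E^0$ as a semilattice transversal, and suppose there is a left action $(x,e)\mapsto x\ast e$ of $S^0$ on $I$ (so $(xy)\ast e=x\ast(y\ast e)$) with $x\ast(ef)=(x\ast e)(x\ast f)$ for all $x\in S^0$, $e,f\in I$. Let $W=\{(e,x)\in I\times S^0: e\in L_{x^+}\}$ with multiplication $(e,x)(g,y)=(e(x\ast g),xy)$, and suppose that $x\ast y^+=(xy)^+$ for all $x,y\in S^0$. Then $W$ is a left abundant semigroup and for every $w\in W$ the $\mathcal{R}^\ast$-class of $w$ in $W$ contains exactly one idempotent.
   Context: For a semigroup $T$, $T^1$ is $T$ with an identity adjoined; $a\,\mathcal{R}^\ast\,b$ iff for all $x,y\in T^1$, $xa=ya\Leftrightarrow xb=yb$; $\mathcal{L}^\ast$ is defined dually. $T$ is left abundant if each $\mathcal{R}^\ast$-class contains an idempotent, abundant if also each $\mathcal{L}^\ast$-class does, and adequate if abundant with commuting idempotents; in an adequate semigroup $x^+$ is the unique idempotent $\mathcal{R}^\ast$-related to $x$. A left regular band satisfies $xyx=xy$; $E^0$ is a semilattice transversal of $I$ if $E^0$ is a subsemilattice of $I$ and each element of $I$ has exactly one inverse in $E^0$. For $x\in E^0$, $L_x$ is the $\mathcal{L}$-class of $x$ in $I$. *)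

(* Generic semigroup notions on a carrier T with
   a binary operation [mul], relativised to a subset [P] (so that a
   subsemigroup given as a predicate can be treated; take P := fun _ => True
   for the whole semigroup). T^1 is modelled by [option T] (None = adjoined 1). *)

Section Gen.
Variable T : Type.
Variable mul : T -> T -> T.

Definition assoc_on (P : T -> Prop) : Prop :=
  forall a b c, P a -> P b -> P c -> mul (mul a b) c = mul a (mul b c).

Definition closed_on (P : T -> Prop) : Prop :=
  forall a b, P a -> P b -> P (mul a b).

Definition lmul1 (x : option T) (a : T) : T :=
  match x with None => a | Some x => mul x a end.
Definition rmul1 (a : T) (x : option T) : T :=
  match x with None => a | Some x => mul a x end.

Definition in1 (P : T -> Prop) (x : option T) : Prop :=
  match x with None => True | Some x => P x end.

Definition idem (e : T) : Prop := mul e e = e.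

Definition Rstar_in (P : T -> Prop) (a b : T) : Prop :=
  forall x y : option T, in1 P x -> in1 P y ->
    (lmul1 x a = lmul1 y a <-> lmul1 x b = lmul1 y b).

Definition Lstar_in (P : T -> Prop) (a b : T) : Prop :=
  forall x y : option T, in1 P x -> in1 P y ->
    (rmul1 a x = rmul1 a y <-> rmul1 b x = rmul1 b y).

Definition left_abundant_in (P : T -> Prop) : Prop :=
  forall a, P a -> exists e, P e /\ idem e /\ Rstar_in P a e.

Definition right_abundant_in (P : T -> Prop) : Prop :=
  forall a, P a -> exists e, P e /\ idem e /\ Lstar_in P a e.

Definition is_semigroup : Prop := forall a b c, mul (mul a b) c = mul a (mul b c).

Definition adequate : Prop :=
  is_semigroup /\ left_abundant_in (fun _ => True) /\
  right_abundant_in (fun _ => True) /\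
  (forall e f, idem e -> idem f -> mul e f = mul f e).

Definition left_regular_band : Prop :=
  is_semigroup /\ (forall x, idem x) /\ (forall x y, mul (mul x y) x = mul x y).

Definition Lrel (a b : T) : Prop :=
  (exists u : option T, a = lmul1 u b) /\ (exists v : option T, b = lmul1 v a).

Definition inverse_of (a b : T) : Prop := mul (mul a b) a = a /\ mul (mul b a) b = b.

End Gen.

(* An element (e, x) of W is R*-related, through its second coordinate, to
   (e, x^+): right multiplication in W only sees x, and x R* x^+ in S.  The pair
   (e, x^+) is idempotent because e and x^+ acting on e both lie in the L-class of
   x^+ in the band I.  Two R*-related idempotents f, g of any semigroup satisfy
   fg = g and gf = f; in W this forces the second coordinate of any idempotent
   R*-related to (e, x) to be x^+ (idempotents of S commute), and then the
   first one to be e (L-related elements of a band absorb each other). *)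

From Stdlib Require Import Setoid.

Section Rstar.

Variables (T : Type) (mul : T -> T -> T) (P : T -> Prop).

Lemma Rstar_in_sym a b : Rstar_in T mul P a b -> Rstar_in T mul P b a.
Proof. intros H x y Hx Hy. symmetry. apply H; assumption. Qed.

Lemma Rstar_in_trans a b c :
  Rstar_in T mul P a b -> Rstar_in T mul P b c -> Rstar_in T mul P a c.
Proof. intros Hab Hbc x y Hx Hy. rewrite (Hab x y Hx Hy). apply Hbc; assumption. Qed.

Lemma Rstar_in_lmul_fix c a b :
  P c -> Rstar_in T mul P a b -> mul c a = a -> mul c b = b.
Proof. intros Pc H. exact (proj1 (H (Some c) None Pc I)). Qed.

Lemma Rstar_in_idem_lmul a e :
  P e -> idem T mul e -> Rstar_in T mul P a e -> mul e a = a.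
Proof. intros Pe He H. exact (Rstar_in_lmul_fix e e a Pe (Rstar_in_sym a e H) He). Qed.

Lemma Rstar_in_idem_absorb e f :
  P e -> P f -> idem T mul e -> idem T mul f -> Rstar_in T mul P e f ->
  mul e f = f /\ mul f e = e.
Proof.
  intros Pe Pf He Hf H. split.
  - exact (Rstar_in_idem_lmul f e Pe He (Rstar_in_sym e f H)).
  - exact (Rstar_in_idem_lmul e f Pf Hf H).
Qed.

End Rstar.

Section Band.

Variables (I : Type) (mulI : I -> I -> I).
Hypothesis Iassoc : is_semigroup I mulI.
Hypothesis Iidem : forall a, idem I mulI a.

Lemma Lrel_iff a b : Lrel I mulI a b <-> mulI a b = a /\ mulI b a = b.
Proof.
  split.
  - intros [[u Hu] [v Hv]]. split.
    + destruct u as [u|]; simpl in Hu; subst a; [rewrite Iassoc, (Iidem b); reflexivity | apply Iidem].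
    + destruct v as [v|]; simpl in Hv; subst b; [rewrite Iassoc, (Iidem a); reflexivity | apply Iidem].
  - intros [Hab Hba]. split; [exists (Some a) | exists (Some b)]; simpl; auto.
Qed.

Lemma Lrel_mul_eq a b f : Lrel I mulI a f -> Lrel I mulI b f -> mulI a b = a.
Proof.
  rewrite !Lrel_iff. intros [Haf _] [_ Hfb].
  rewrite <- Haf at 1. rewrite Iassoc, Hfb. exact Haf.
Qed.

Lemma Lrel_hom (h : I -> I) a b :
  (forall u v, h (mulI u v) = mulI (h u) (h v)) ->
  Lrel I mulI a b -> Lrel I mulI (h a) (h b).
Proof. intros Hh. rewrite !Lrel_iff, <- !Hh. intros [-> ->]. auto. Qed.

End Band.

Section Plus.

Variables (S : Type) (mulS : S -> S -> S) (plus : S -> S).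
Hypothesis Sassoc : is_semigroup S mulS.
Hypothesis Scomm : forall e f, idem S mulS e -> idem S mulS f -> mulS e f = mulS f e.
Hypothesis Hplus : forall x,
  idem S mulS (plus x) /\ Rstar_in S mulS (fun _ => True) x (plus x).

Lemma plus_lmul x : mulS (plus x) x = x.
Proof. destruct (Hplus x) as [Hp HR]. exact (Rstar_in_idem_lmul _ _ _ x _ I Hp HR). Qed.

Lemma plus_of_idem e : idem S mulS e -> plus e = e.
Proof.
  intros He. destruct (Hplus e) as [Hp HR].
  destruct (Rstar_in_idem_absorb _ _ _ e (plus e) I I He Hp HR) as [Hep Hpe].
  rewrite <- Hep, Scomm; assumption.
Qed.

Lemma plus_mul_plus x y : mulS (plus (mulS x y)) (plus x) = plus (mulS x y).
Proof.
  assert (Hfix : mulS (plus x) (plus (mulS x y)) = plus (mulS x y)).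
  { apply (Rstar_in_lmul_fix _ _ _ _ (mulS x y) _ I (proj2 (Hplus _))).
    rewrite <- Sassoc, plus_lmul. reflexivity. }
  rewrite Scomm by apply Hplus. exact Hfix.
Qed.

End Plus.

Section W.

Variables (S I : Type) (mulS : S -> S -> S) (mulI : I -> I -> I)
  (plus : S -> S) (emb : S -> I) (act : S -> I -> I).
Hypothesis Sassoc : is_semigroup S mulS.
Hypothesis Scomm : forall e f, idem S mulS e -> idem S mulS f -> mulS e f = mulS f e.
Hypothesis Hplus : forall x,
  idem S mulS (plus x) /\ Rstar_in S mulS (fun _ => True) x (plus x).
Hypothesis Iassoc : is_semigroup I mulI.
Hypothesis Iidem : forall a, idem I mulI a.
Hypothesis Hemb_hom : forall e f, idem S mulS e -> idem S mulS f ->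
  emb (mulS e f) = mulI (emb e) (emb f).
Hypothesis Hact : forall x y e, act (mulS x y) e = act x (act y e).
Hypothesis Hact_mul : forall x e f, act x (mulI e f) = mulI (act x e) (act x f).
Hypothesis Hplus_act : forall x y, act x (emb (plus y)) = emb (plus (mulS x y)).

Definition Wmem (w : I * S) : Prop := Lrel I mulI (fst w) (emb (plus (snd w))).

Definition Wmul (w v : I * S) : I * S :=
  (mulI (fst w) (act (snd w) (fst v)), mulS (snd w) (snd v)).

Definition Wplus (w : I * S) : I * S := (fst w, plus (snd w)).

Lemma Wmul_assoc w v u : Wmul (Wmul w v) u = Wmul w (Wmul v u).
Proof.
  destruct w as [e x], v as [g y], u as [h z]. unfold Wmul; simpl.
  rewrite Hact_mul, Hact, Iassoc, Sassoc. reflexivity.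
Qed.

Lemma Wmul_closed : closed_on (I * S) Wmul Wmem.
Proof.
  intros [e x] [g y]. unfold Wmem; simpl. rewrite !(Lrel_iff _ _ Iassoc Iidem).
  intros [He1 He2] [Hg1 Hg2]. split.
  - rewrite <- Hplus_act, Iassoc, <- Hact_mul, Hg1. reflexivity.
  - assert (Hxy_e : mulI (emb (plus (mulS x y))) e = emb (plus (mulS x y))).
    { assert (Hxy_x : mulI (emb (plus (mulS x y))) (emb (plus x)) = emb (plus (mulS x y))).
      { rewrite <- Hemb_hom by apply Hplus. f_equal.
        exact (plus_mul_plus _ _ _ Sassoc Scomm Hplus x y). }
      rewrite <- Hxy_x at 1. rewrite Iassoc, He2. exact Hxy_x. }
    rewrite <- Iassoc, Hxy_e, <- Hplus_act, <- Hact_mul, Hg2. reflexivity.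
Qed.

Lemma act_plus_Lrel e x :
  Lrel I mulI e (emb (plus x)) -> Lrel I mulI (act (plus x) e) (emb (plus x)).
Proof.
  intros He.
  assert (Hfix : act (plus x) (emb (plus x)) = emb (plus x)).
  { rewrite Hplus_act, (plus_lmul _ _ _ Hplus). reflexivity. }
  rewrite <- Hfix. exact (Lrel_hom _ _ Iassoc Iidem _ _ _ (Hact_mul _) He).
Qed.

Lemma Wmem_Wplus w : Wmem w -> Wmem (Wplus w).
Proof.
  destruct w as [e x]. unfold Wmem, Wplus; simpl.
  rewrite (plus_of_idem _ _ _ Scomm Hplus (plus x)) by apply Hplus. auto.
Qed.

Lemma Wplus_idem w : Wmem w -> idem (I * S) Wmul (Wplus w).
Proof.
  destruct w as [e x]. unfold Wmem, Wplus, Wmul, idem; simpl. intros He.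
  rewrite (Lrel_mul_eq _ _ Iassoc Iidem e _ _ He (act_plus_Lrel e x He)).
  rewrite (proj1 (Hplus x)). reflexivity.
Qed.

Lemma Rstar_in_W_pair e x y :
  Rstar_in S mulS (fun _ => True) x y -> Rstar_in (I * S) Wmul Wmem (e, x) (e, y).
Proof.
  intros Hxy u v _ _.
  destruct u as [[p s]|], v as [[q t]|]; simpl; unfold Wmul; simpl;
    try tauto;
    [ specialize (Hxy (Some s) (Some t) Logic.I Logic.I)
    | specialize (Hxy (Some s) None Logic.I Logic.I)
    | specialize (Hxy None (Some t) Logic.I Logic.I) ]; simpl in Hxy;
    split; intros H; injection H; intros; f_equal; auto; apply Hxy; auto.
Qed.

Lemma Rstar_in_Wplus w : Rstar_in (I * S) Wmul Wmem w (Wplus w).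
Proof. destruct w as [e x]. apply Rstar_in_W_pair, Hplus. Qed.

Lemma Wmem_idem_Rstar_unique w f :
  Wmem w -> Wmem f -> idem (I * S) Wmul f -> Rstar_in (I * S) Wmul Wmem w f ->
  f = Wplus w.
Proof.
  intros Hw Hf Hfid Hwf.
  assert (Hpf : Rstar_in (I * S) Wmul Wmem (Wplus w) f)
    by exact (Rstar_in_trans _ _ _ _ _ _ (Rstar_in_sym _ _ _ _ _ (Rstar_in_Wplus w)) Hwf).
  destruct (Rstar_in_idem_absorb _ _ _ _ _ (Wmem_Wplus w Hw) Hf (Wplus_idem w Hw) Hfid Hpf)
    as [Hpf_f Hfp_p].
  destruct w as [e x], f as [g h]. unfold Wmem, Wplus, Wmul, idem in *; simpl in *.
  injection Hpf_f as Hg Hh. injection Hfp_p as _ Hhx. injection Hfid as _ Hhid.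
  assert (Hh_plus : h = plus x)
    by (rewrite <- Hhx, Scomm, Hh by (apply Hplus || assumption); reflexivity).
  subst h. rewrite <- Hg.
  f_equal. apply (Lrel_mul_eq _ _ Iassoc Iidem e _ (emb (plus x)) Hw).
  apply act_plus_Lrel. rewrite (plus_of_idem _ _ _ Scomm Hplus (plus x)) in Hf by apply Hplus.
  exact Hf.
Qed.

End W.

Theorem lemma3p2 (S I : Type) (mulS : S -> S -> S) (mulI : I -> I -> I)
  (plus : S -> S) (emb : S -> I) (act : S -> I -> I)
  (HS : adequate S mulS)
  (Hplus : forall x, idem S mulS (plus x) /\ Rstar_in S mulS (fun _ => True) x (plus x))
  (HI : left_regular_band I mulI)
  (Hemb_hom : forall e f, idem S mulS e -> idem S mulS f ->
      emb (mulS e f) = mulI (emb e) (emb f))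
  (Hemb_inj : forall e f, idem S mulS e -> idem S mulS f -> emb e = emb f -> e = f)
  (Htrans : forall i : I, exists e, idem S mulS e /\ inverse_of I mulI (emb e) i /\
      forall f, idem S mulS f -> inverse_of I mulI (emb f) i -> f = e)
  (Hact : forall x y e, act (mulS x y) e = act x (act y e))
  (Hact_mul : forall x e f, act x (mulI e f) = mulI (act x e) (act x f))
  (Hplus_act : forall x y, act x (emb (plus y)) = emb (plus (mulS x y))) :
  let inW := fun w : I * S => Lrel I mulI (fst w) (emb (plus (snd w))) in
  let mulW := fun w v : I * S =>
      (mulI (fst w) (act (snd w) (fst v)), mulS (snd w) (snd v)) in
  closed_on (I * S) mulW inW /\
  assoc_on (I * S) mulW inW /\
  left_abundant_in (I * S) mulW inW /\
  (forall w, inW w -> exists e, (inW e /\ idem (I * S) mulW e /\ Rstar_in (I * S) mulW inW w e) /\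
      forall e', inW e' -> idem (I * S) mulW e' -> Rstar_in (I * S) mulW inW w e' -> e' = e).
Proof.
  intros inW mulW.
  destruct HS as [Sassoc [_ [_ Scomm]]]. destruct HI as [Iassoc [Iidem _]].
  assert (Hunique : forall w, inW w ->
    exists e, (inW e /\ idem (I * S) mulW e /\ Rstar_in (I * S) mulW inW w e) /\
      forall e', inW e' -> idem (I * S) mulW e' -> Rstar_in (I * S) mulW inW w e' -> e' = e).
  { intros w Hw. exists (Wplus S I plus w). split; [split; [|split]|].
    - eapply Wmem_Wplus; eauto.
    - eapply Wplus_idem; eauto.
    - eapply Rstar_in_Wplus; eauto.
    - intros f. eapply Wmem_idem_Rstar_unique; eauto. }
  split; [|split; [|split]].
  - eapply Wmul_closed; eauto.
  - intros w v u _ _ _. eapply Wmul_assoc; eauto.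
  - intros w Hw. destruct (Hunique w Hw) as [e [He _]]. exists e. exact He.
  - exact Hunique.
Qed.
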